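(* Let $N\in\mathbb N$ and, for $p>1$ and $x\in\mathbb R$, let \[\mathfrak h_{p,N}(x)=\sum_{n\in\mathbb Z,\ |x-n|>N}|\mathrm{sinc}(x-n)|^p .\] Then there exists $p_*$ such that $x=1/2$ is a local minimum point of $\mathfrak h_{p,N}$ if $p>p_*$ and a local maximum point of $\mathfrak h_{p,N}$ if $p<p_*$. The value $p_*$ is a solution of the equation \[4(p_*+1)\lambda(p_*+2;N)-\pi^2\lambda(p_*;N)=0,\] and it satisfies \[p_*\ge \frac18\Big(\pi^2(2N+1)^2-12+\sqrt{(\pi^2(2N+1)^2-12)^2-128}\Big),\] \[p_*\le \frac14\sqrt{72\pi^2(N+1)^2\big(2\pi^2(N+1)^2-2-\pi^2\big)+4+36\pi^2+9\pi^4}+3\pi^2(N+1)^2-\frac34(2+\pi^2).\]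
   Context: $\mathrm{sinc}(x)=\frac{\sin(\pi x)}{\pi x}$ for $x\neq0$ and $\mathrm{sinc}(0)=1$. The incomplete Lambda function is $\lambda(s;a)=\sum_{n=1}^\infty \frac{1}{(2(n+a)-1)^s}$ for $s>1$, $a\ge 0$. *)

From Stdlib Require Import Reals ZArith.
From Coquelicot Require Import Coquelicot.
Open Scope R_scope.

Definition sinc (x : R) : R :=
  if Req_EM_T x 0 then 1 else sin (PI * x) / (PI * x).

(* |y|^p for real exponent p > 0, with the convention 0^p = 0
   (Stdlib's Rpower 0 p is exp(p * ln 0) = 1, so we special-case 0). *)
Definition abs_pow (y p : R) : R :=
  if Req_EM_T y 0 then 0 else Rpower (Rabs y) p.

Definition h_term (p : R) (N : nat) (x : R) (n : Z) : R :=
  if Rlt_dec (INR N) (Rabs (x - IZR n)) then abs_pow (sinc (x - IZR n)) p else 0.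

Definition frak_h (p : R) (N : nat) (x : R) : R :=
  Series (fun k : nat => h_term p N x (Z.of_nat k))
  + Series (fun k : nat => h_term p N x (- Z.of_nat k - 1)%Z).

Definition lambda_inc (s a : R) : R :=
  Series (fun k : nat => / Rpower (2 * (INR (S k) + a) - 1) s).

Definition is_local_min (f : R -> R) (x0 : R) : Prop :=
  exists delta : R, 0 < delta /\ forall x, Rabs (x - x0) < delta -> f x0 <= f x.

Definition is_local_max (f : R -> R) (x0 : R) : Prop :=
  exists delta : R, 0 < delta /\ forall x, Rabs (x - x0) < delta -> f x <= f x0.

(* Write x = 1/2 + s.  The integers n with |x - n| > N come in pairs sitting at
   x - n = s -/+ b/2 with b = 2 (N + j) + 1 odd, where |sinc| equals
   cos (PI s) / (PI (b/2 +/- s)).  Expanding each pair to second order in s gives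
     h_{p,N}(x) - h_{p,N}(1/2)
       = c_p s^2 (4 (p + 1) lambda(p + 2; N) - PI^2 lambda(p; N)) + O(|s|^3),  c_p > 0,
   so the sign of the bracket decides between a minimum and a maximum.  The bracket is
   continuous in p, negative whenever 4 (p + 1) < PI^2 (2N + 1)^2 (which gives the lower
   bound), positive at the stated upper bound, and once nonnegative it stays positive: a
   Chebyshev-type reweighting of its terms.  So p_* is its unique zero, obtained from the
   intermediate value theorem. *)

From Stdlib Require Import Reals Ranalysis5 ZArith Lra Lia.
From Coquelicot Require Import Coquelicot.
Open Scope R_scope.

(** * Elementary Taylor bounds *)

Lemma Rabs_sub_0_le_MVT (f f' : R -> R) (x M : R) :
  (forall c, Rabs c <= Rabs x -> derivable_pt_lim f c (f' c)) ->
  (forall c, Rabs c <= Rabs x -> Rabs (f' c) <= M) ->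
  Rabs (f x - f 0) <= M * Rabs x.
Proof.
  intros Hd Hb.
  assert (Hc : forall c, Rmin 0 x <= c <= Rmax 0 x -> Rabs c <= Rabs x).
  { intros c [H1 H2]. unfold Rmin, Rmax in *.
    destruct (Rle_dec 0 x); unfold Rabs; repeat destruct Rcase_abs; lra. }
  destruct (MVT_abs f f' 0 x) as [c [Hc1 Hc2]].
  { intros c Hc'. apply Hd, Hc, Hc'. }
  rewrite Hc1, Rminus_0_r. apply Rmult_le_compat_r; [apply Rabs_pos|].
  apply Hb, Hc, Hc2.
Qed.

Lemma exp_le_compat x y : x <= y -> exp x <= exp y.
Proof.
  intros [Hlt|Heq]; [left; apply exp_increasing, Hlt | right; rewrite Heq; reflexivity].
Qed.

Lemma Rabs_exp_sub1_le z : Rabs z <= 1 -> Rabs (exp z - 1) <= 3 * Rabs z.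
Proof.
  intros Hz.
  replace (exp z - 1) with (exp z - exp 0) by (rewrite exp_0; ring).
  apply (Rabs_sub_0_le_MVT exp exp).
  - intros c _. apply derivable_pt_lim_exp.
  - intros c Hc. rewrite Rabs_pos_eq by (left; apply exp_pos).
    apply Rle_trans with (exp 1); [|apply exp_le_3].
    apply exp_le_compat. apply Rle_trans with (Rabs c); [apply RRle_abs | lra].
Qed.

Lemma Rabs_exp_taylor1_le z : Rabs z <= 1 -> Rabs (exp z - 1 - z) <= 3 * z^2.
Proof.
  intros Hz.
  replace (exp z - 1 - z) with
    ((fun t => exp t - 1 - t) z - (fun t => exp t - 1 - t) 0) by (cbv beta; rewrite exp_0; ring).
  replace (3 * z^2) with ((3 * Rabs z) * Rabs z) by (rewrite <- (pow2_abs z); ring).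
  apply (Rabs_sub_0_le_MVT (fun t => exp t - 1 - t) (fun t => exp t - 1)).
  - intros c _. apply is_derive_Reals. auto_derive; auto; ring.
  - intros c Hc. apply Rle_trans with (3 * Rabs c); [apply Rabs_exp_sub1_le|]; lra.
Qed.

Lemma Rabs_exp_taylor2_le z : Rabs z <= 1 -> Rabs (exp z - 1 - z - z^2/2) <= 3 * Rabs z ^ 3.
Proof.
  intros Hz.
  replace (exp z - 1 - z - z^2/2) with
    ((fun t => exp t - 1 - t - t^2/2) z - (fun t => exp t - 1 - t - t^2/2) 0)
    by (cbv beta; rewrite exp_0; field).
  replace (3 * Rabs z ^ 3) with ((3 * z^2) * Rabs z) by (rewrite <- (pow2_abs z); ring).
  apply (Rabs_sub_0_le_MVT (fun t => exp t - 1 - t - t^2/2) (fun t => exp t - 1 - t)).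
  - intros c _. apply is_derive_Reals. auto_derive; auto; field.
  - intros c Hc. apply Rle_trans with (3 * c^2); [apply Rabs_exp_taylor1_le; lra|].
    rewrite <- (pow2_abs c), <- (pow2_abs z).
    pose proof (Rabs_pos c). nra.
Qed.

Lemma Rabs_ln1p_taylor1_le w : Rabs w <= /2 -> Rabs (ln (1 + w) - w) <= 2 * w^2.
Proof.
  intros Hw.
  replace (ln (1 + w) - w) with
    ((fun t => ln (1 + t) - t) w - (fun t => ln (1 + t) - t) 0)
    by (cbv beta; rewrite Rplus_0_r, ln_1; ring).
  replace (2 * w^2) with ((2 * Rabs w) * Rabs w) by (rewrite <- (pow2_abs w); ring).
  apply (Rabs_sub_0_le_MVT (fun t => ln (1 + t) - t) (fun t => / (1 + t) - 1)).
  - intros c Hc. assert (-/2 <= c <= /2) by (apply Rabs_le_between; lra).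
    apply is_derive_Reals. auto_derive; [lra | field; lra].
  - intros c Hc. assert (-/2 <= c <= /2) by (apply Rabs_le_between; lra).
    replace (/ (1 + c) - 1) with (- c / (1 + c)) by (field; lra).
    unfold Rdiv. rewrite Rabs_mult, Rabs_Ropp, Rabs_inv, (Rabs_pos_eq (1 + c)) by lra.
    apply Rle_trans with (Rabs c * 2).
    + apply Rmult_le_compat_l; [apply Rabs_pos|].
      rewrite <- (Rinv_inv 2). apply Rinv_le_contravar; lra.
    + lra.
Qed.

Lemma Rabs_ln1p_taylor2_le w :
  Rabs w <= /2 -> Rabs (ln (1 + w) - w + w^2/2) <= 2 * Rabs w ^ 3.
Proof.
  intros Hw.
  replace (ln (1 + w) - w + w^2/2) with
    ((fun t => ln (1 + t) - t + t^2/2) w - (fun t => ln (1 + t) - t + t^2/2) 0)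
    by (cbv beta; rewrite Rplus_0_r, ln_1; field).
  replace (2 * Rabs w ^ 3) with ((2 * w^2) * Rabs w) by (rewrite <- (pow2_abs w); ring).
  apply (Rabs_sub_0_le_MVT (fun t => ln (1 + t) - t + t^2/2) (fun t => / (1 + t) - 1 + t)).
  - intros c Hc. assert (-/2 <= c <= /2) by (apply Rabs_le_between; lra).
    apply is_derive_Reals. auto_derive; [lra | field; lra].
  - intros c Hc. assert (-/2 <= c <= /2) by (apply Rabs_le_between; lra).
    replace (/ (1 + c) - 1 + c) with (c^2 / (1 + c)) by (field; lra).
    unfold Rdiv. rewrite Rabs_mult, Rabs_inv, (Rabs_pos_eq (1 + c)), Rabs_pos_eq by nra.
    apply Rle_trans with (c^2 * 2).
    + apply Rmult_le_compat_l; [nra|]. rewrite <- (Rinv_inv 2). apply Rinv_le_contravar; lra.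
    + rewrite <- (pow2_abs c), <- (pow2_abs w). pose proof (Rabs_pos c). nra.
Qed.

Lemma cos_taylor_bounds y : Rabs y <= 1 -> 1 - y^2/2 <= cos y <= 1 - y^2/2 + y^4/24.
Proof.
  intros Hy. apply Rabs_le_between in Hy.
  destruct (pre_cos_bound y 0) as [H1 H2]; [lra | lra |].
  unfold cos_approx, cos_term in H1, H2. simpl in H1, H2. lra.
Qed.

Lemma Rabs_ln_cos_taylor_le y : Rabs y <= /2 -> Rabs (ln (cos y) + y^2/2) <= y^4.
Proof.
  intros Hy.
  destruct (cos_taylor_bounds y) as [H1 H2]; [lra|].
  assert (Hy2 : y^2 <= /4) by (rewrite <- (pow2_abs y); pose proof (Rabs_pos y); nra).
  set (w := cos y - 1).
  assert (Hw : Rabs w <= y^2/2) by (apply Rabs_le; unfold w; nra).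
  pose proof (Rabs_ln1p_taylor1_le w ltac:(lra)) as Hl.
  replace (1 + w) with (cos y) in Hl by (unfold w; ring).
  replace (ln (cos y) + y^2/2) with ((ln (cos y) - w) + (w + y^2/2)) by ring.
  eapply Rle_trans; [apply Rabs_triang|].
  assert (Rabs (w + y^2/2) <= y^4/24) by (apply Rabs_le; unfold w; nra).
  assert (w^2 <= (y^2/2)^2) by (rewrite <- (pow2_abs w); pose proof (Rabs_pos w); nra).
  nra.
Qed.

Lemma PI_mult_sq_le s : (PI * s)^2 <= 16 * Rabs s ^ 2.
Proof.
  pose proof PI_4. pose proof PI_RGT_0. pose proof (Rabs_pos s).
  rewrite <- (pow2_abs (PI * s)), Rabs_mult, (Rabs_pos_eq PI) by lra.
  replace (16 * Rabs s ^ 2) with ((4 * Rabs s)^2) by ring.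
  apply pow_incr. split; [nra | apply Rmult_le_compat_r; lra].
Qed.

Lemma Rabs_ln_cos_PI_taylor_le s :
  Rabs s <= /8 -> Rabs (ln (cos (PI * s)) + (PI * s)^2 / 2) <= 32 * Rabs s ^ 3.
Proof.
  intros Hs. pose proof (PI_mult_sq_le s). pose proof (Rabs_pos s).
  pose proof PI_4. pose proof PI_RGT_0.
  eapply Rle_trans; [apply Rabs_ln_cos_taylor_le|].
  - rewrite Rabs_mult, (Rabs_pos_eq PI) by lra. nra.
  - replace ((PI * s)^4) with ((PI * s)^2 * (PI * s)^2) by ring.
    assert (0 <= (PI * s)^2) by nra.
    apply Rle_trans with ((16 * Rabs s ^ 2) * (16 * Rabs s ^ 2)); [apply Rmult_le_compat; lra|].
    pose proof (pow_le (Rabs s) 3 (Rabs_pos s)). nra.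
Qed.

Lemma Rabs_ln1p_taylor2_small_le s u : Rabs s <= /8 -> Rabs u <= 2 * Rabs s ->
  Rabs (ln (1 + u) - u + u^2 / 2) <= 16 * Rabs s ^ 3.
Proof.
  intros Hs Hu. pose proof (Rabs_pos u).
  eapply Rle_trans; [apply Rabs_ln1p_taylor2_le; lra|].
  replace (16 * Rabs s ^ 3) with (2 * (2 * Rabs s)^3) by ring.
  apply Rmult_le_compat_l; [lra|]. apply pow_incr. lra.
Qed.

Lemma Rabs_ln_cos_PI_sub_ln1p_le s u : Rabs s <= /8 -> Rabs u <= 2 * Rabs s ->
  Rabs (ln (cos (PI * s)) - ln (1 + u)) <= 4 * Rabs s.
Proof.
  intros Hs Hu.
  pose proof (Rabs_ln_cos_PI_taylor_le s Hs) as E1.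
  pose proof (Rabs_ln1p_taylor2_small_le s u Hs Hu) as E2.
  pose proof (PI_mult_sq_le s). pose proof (Rabs_pos s).
  assert (u^2 <= 4 * Rabs s ^ 2) by (rewrite <- (pow2_abs u); pose proof (Rabs_pos u); nra).
  apply Rabs_le_between in E1, E2, Hu. apply Rabs_le. nra.
Qed.

Lemma Rpower_pos x y : 0 < Rpower x y.
Proof. apply exp_pos. Qed.

Lemma Rpower_half_opp b p : 0 < b -> Rpower (b / 2) (- p) = Rpower 2 p * Rpower b (- p).
Proof. intros. unfold Rpower. rewrite <- exp_plus, ln_div by lra. f_equal. ring. Qed.

Lemma Rpower_opp_add2 b p : 0 < b -> Rpower b (- (p + 2)) = Rpower b (- p) / b^2.
Proof.
  intros. replace (- (p + 2)) with (- p + - INR 2) by (simpl; ring).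
  rewrite Rpower_plus, (Rpower_Ropp b (INR 2)), Rpower_pow by auto. reflexivity.
Qed.

Lemma Rpower_opp_antimono b c r : 0 < b -> b <= c -> 0 <= r -> Rpower c (- r) <= Rpower b (- r).
Proof.
  intros. rewrite !Rpower_Ropp. apply Rinv_le_contravar; [apply Rpower_pos|].
  apply Rle_Rpower_l; lra.
Qed.

Lemma Rpower_div_PI_mult p c q w : 0 < c -> 0 < q -> 0 < w ->
  Rpower (c / (PI * (q * w))) p = Rpower PI (- p) * Rpower q (- p) * exp (p * (ln c - ln w)).
Proof.
  intros Hc Hq Hw. pose proof PI_RGT_0. unfold Rpower. rewrite <- !exp_plus. f_equal.
  assert (0 < q * w) by (apply Rmult_lt_0_compat; lra).
  assert (0 < PI * (q * w)) by (apply Rmult_lt_0_compat; lra).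
  rewrite ln_div, !ln_mult by lra. ring.
Qed.

Lemma ln_ge_1_sub_inv y : 0 < y -> 1 - / y <= ln y.
Proof.
  intros Hy. pose proof (exp_ineq1_le (ln (/ y))).
  rewrite exp_ln, ln_Rinv in * by (try apply Rinv_0_lt_compat; lra). lra.
Qed.

(* [x ^ (1 - q) / (2 (q - 1))] dominates the tail of [sum_j (x + 2 j) ^ (- q)]. *)
Lemma Rpower_tail_step q x : 1 < q -> 1 <= x ->
  Rpower (x + 2) (- q) + Rpower (x + 2) (1 - q) / (2 * (q - 1)) <= Rpower x (1 - q) / (2 * (q - 1)).
Proof.
  intros Hq Hx. unfold Rpower.
  set (r := q - 1). assert (Hr : 0 < r) by (unfold r; lra).
  replace (1 - q) with (- r) by (unfold r; ring).
  replace (- q) with (- r + -1) by (unfold r; ring).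
  rewrite Rmult_plus_distr_r, exp_plus.
  replace (-1 * ln (x + 2)) with (ln (/ (x + 2))) by (rewrite ln_Rinv by lra; ring).
  rewrite exp_ln by (apply Rinv_0_lt_compat; lra).
  replace (- r * ln x) with (- r * ln (x + 2) + r * (ln (x + 2) - ln x)) by ring.
  rewrite exp_plus.
  set (E := exp (- r * ln (x + 2))). assert (0 < E) by apply exp_pos.
  assert (Hl : 2 / (x + 2) <= ln (x + 2) - ln x).
  { rewrite <- ln_div by lra. eapply Rle_trans; [|apply ln_ge_1_sub_inv, Rdiv_lt_0_compat; lra].
    right. field. lra. }
  pose proof (exp_ineq1_le (r * (ln (x + 2) - ln x))).
  assert (r * (2 / (x + 2)) <= r * (ln (x + 2) - ln x)) by (apply Rmult_le_compat_l; lra).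
  apply Rmult_le_reg_r with (2 * r); [lra|].
  replace ((E * / (x + 2) + E / (2 * r)) * (2 * r)) with (E * (1 + r * (2 / (x + 2))))
    by (field; lra).
  replace (E * exp (r * (ln (x + 2) - ln x)) / (2 * r) * (2 * r))
    with (E * exp (r * (ln (x + 2) - ln x))) by (field; lra).
  apply Rmult_le_compat_l; lra.
Qed.

Lemma Rpower_opp_sub_le b e s1 s s' : 1 <= b -> 0 < e -> s1 <= s <= s' ->
  0 <= Rpower b (- s) - Rpower b (- s') <= (s' - s) * Rpower b (- (s1 - e)) / e.
Proof.
  intros Hb He Hs.
  assert (HL : 0 <= ln b) by (rewrite <- ln_1; apply ln_le; lra).
  unfold Rpower. set (L := ln b) in *.
  replace (exp (- s' * L)) with (exp (- s * L) * exp (- (s' - s) * L))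
    by (rewrite <- exp_plus; f_equal; ring).
  assert (Hx : 0 < exp (- s * L)) by apply exp_pos.
  assert (Hd : exp (- (s' - s) * L) <= 1)
    by (rewrite <- exp_0; apply exp_le_compat; nra).
  split; [nra|].
  pose proof (exp_ineq1_le (- (s' - s) * L)).
  pose proof (exp_ineq1_le (e * L)).
  assert (HLe : L <= exp (e * L) / e).
  { apply Rmult_le_reg_r with e; [lra|]. unfold Rdiv. rewrite Rmult_assoc, Rinv_l by lra. nra. }
  assert (Hs1 : exp (- s * L) * exp (e * L) <= exp (- (s1 - e) * L))
    by (rewrite <- exp_plus; apply exp_le_compat; nra).
  apply Rle_trans with (exp (- s * L) * ((s' - s) * L)); [nra|].
  apply Rle_trans with (exp (- s * L) * ((s' - s) * (exp (e * L) / e))).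
  - apply Rmult_le_compat_l; [lra|]. apply Rmult_le_compat_l; lra.
  - replace (exp (- s * L) * ((s' - s) * (exp (e * L) / e)))
      with ((s' - s) * (exp (- s * L) * exp (e * L)) / e) by (field; lra).
    unfold Rdiv. apply Rmult_le_compat_r; [left; apply Rinv_0_lt_compat; lra|].
    apply Rmult_le_compat_l; lra.
Qed.

(* Both factors are decreasing in [b] and vanish at [b = A]. *)
Lemma Rpower_opp_sub_mul_nonneg b A r c : 0 < b -> 0 < A -> 0 <= r -> 0 <= c ->
  0 <= (Rpower b (- r) - Rpower A (- r)) * (c / b^2 - c / A^2).
Proof.
  intros Hb HA Hr Hc.
  destruct (Rle_lt_dec b A) as [HbA|HAb].
  - pose proof (Rpower_opp_antimono b A r Hb HbA Hr).
    assert (c / A^2 <= c / b^2).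
    { unfold Rdiv. apply Rmult_le_compat_l; [lra|].
      apply Rinv_le_contravar; [nra | apply pow_incr; lra]. }
    apply Rmult_le_pos; lra.
  - pose proof (Rpower_opp_antimono A b r HA (Rlt_le _ _ HAb) Hr).
    assert (c / b^2 <= c / A^2).
    { unfold Rdiv. apply Rmult_le_compat_l; [lra|].
      apply Rinv_le_contravar; [nra | apply pow_incr; lra]. }
    replace ((Rpower b (- r) - Rpower A (- r)) * (c / b^2 - c / A^2))
      with ((Rpower A (- r) - Rpower b (- r)) * (c / A^2 - c / b^2)) by ring.
    apply Rmult_le_pos; lra.
Qed.

Lemma is_series_le (a b : nat -> R) la lb :
  is_series a la -> is_series b lb -> (forall n, a n <= b n) -> la <= lb.
Proof.
  intros Ha Hb H.
  exact (is_lim_seq_le _ _ la lb (fun n => sum_n_m_le a b O n H) Ha Hb).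
Qed.

Lemma is_series_Rabs_le (a c : nat -> R) la lc :
  is_series a la -> is_series c lc -> (forall n, Rabs (a n) <= c n) -> Rabs la <= lc.
Proof.
  intros Ha Hc H. apply Rabs_le. split.
  - apply (is_series_le _ _ _ _ (is_series_opp _ _ Hc) Ha).
    intros n. change (opp (c n)) with (- c n).
    pose proof (proj1 (Rabs_le_between _ _) (H n)). lra.
  - apply (is_series_le _ _ _ _ Ha Hc).
    intros n. pose proof (proj1 (Rabs_le_between _ _) (H n)). lra.
Qed.

Lemma is_series_of_bounded_sums (a : nat -> R) M :
  (forall n, 0 <= a n) -> (forall n, sum_n a n <= M) -> exists l, is_series a l /\ l <= M.
Proof.
  intros H0 HM.
  assert (Hinc : forall n, sum_n a n <= sum_n a (S n)).
  { intros n. rewrite sum_Sn. specialize (H0 (S n)). unfold plus; simpl; lra. }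
  destruct (ex_finite_lim_seq_incr _ M Hinc HM) as [l Hl].
  exists l. split; [exact Hl|].
  exact (is_lim_seq_le _ (fun _ => M) l M HM Hl (is_lim_seq_const M)).
Qed.

Lemma sum_n_le_is_series (a : nat -> R) l n :
  (forall k, 0 <= a k) -> is_series a l -> sum_n a n <= l.
Proof.
  intros H0 Hl. apply (is_lim_seq_incr_compare (sum_n a) l Hl).
  intros k. rewrite sum_Sn. specialize (H0 (S k)). unfold plus; simpl; lra.
Qed.

Lemma is_series_nonneg (a : nat -> R) l : (forall k, 0 <= a k) -> is_series a l -> 0 <= l.
Proof.
  intros H0 Hl. pose proof (sum_n_le_is_series a l O H0 Hl). rewrite sum_O in H.
  specialize (H0 O). lra.
Qed.

Lemma is_series_of_shift_zeros n (a : nat -> R) l :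
  (forall k, (k < n)%nat -> a k = 0) -> is_series (fun k => a (n + k)%nat) l -> is_series a l.
Proof.
  revert a. induction n as [|n IH]; intros a Hz H.
  - exact H.
  - apply is_series_decr_1. rewrite Hz by lia. unfold plus, opp; simpl.
    rewrite Ropp_0, Rplus_0_r.
    apply (IH (fun k => a (S k))); [intros k Hk; apply Hz; lia | exact H].
Qed.

(* Pairing [n = k + 1] with [n = - k] enumerates [Z] exactly once. *)
Lemma Series_Z_pair (f : Z -> R) (l : R) : (forall n, 0 <= f n) ->
  is_series (fun k : nat => f (Z.of_nat k + 1)%Z + f (- Z.of_nat k)%Z) l ->
  Series (fun k : nat => f (Z.of_nat k)) + Series (fun k : nat => f (- Z.of_nat k - 1)%Z) = l.
Proof.
  intros Hf Hl.
  assert (Hpos : ex_series (fun k : nat => f (Z.of_nat k + 1)%Z)).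
  { apply (ex_series_le (V := R_CompleteNormedModule) _
             (fun k => f (Z.of_nat k + 1)%Z + f (- Z.of_nat k)%Z)); [|exists l; exact Hl].
    intros k. change (norm ?x) with (Rabs x).
    rewrite Rabs_pos_eq by apply Hf. pose proof (Hf (- Z.of_nat k)%Z). lra. }
  assert (Hneg : ex_series (fun k : nat => f (- Z.of_nat k)%Z)).
  { apply ex_series_incr_1.
    apply (ex_series_le (V := R_CompleteNormedModule) _
             (fun k => f (Z.of_nat (S k) + 1)%Z + f (- Z.of_nat (S k))%Z)).
    - intros k. change (norm ?x) with (Rabs x).
      rewrite Rabs_pos_eq by apply Hf. pose proof (Hf (Z.of_nat (S k) + 1)%Z). lra.
    - apply (ex_series_incr_1 (fun k => f (Z.of_nat k + 1)%Z + f (- Z.of_nat k)%Z)).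
      exists l; exact Hl. }
  rewrite <- (is_series_unique _ _ Hl), Series_plus by assumption.
  rewrite (Series_incr_1 (fun k : nat => f (Z.of_nat k))).
  2: { apply ex_series_incr_1. eapply ex_series_ext; [|exact Hpos].
       intros k. simpl. f_equal. lia. }
  rewrite (Series_incr_1 (fun k : nat => f (- Z.of_nat k)%Z)) by exact Hneg.
  rewrite (Series_ext (fun k => f (Z.of_nat (S k))) (fun k => f (Z.of_nat k + 1)%Z))
    by (intros k; f_equal; lia).
  rewrite (Series_ext (fun k => f (- Z.of_nat (S k))%Z) (fun k => f (- Z.of_nat k - 1)%Z))
    by (intros k; f_equal; lia).
  simpl. ring.
Qed.

Lemma is_local_min_of_quadratic (f : R -> R) x0 a C d : 0 < a -> 0 < d -> 0 <= C ->
  (forall x, Rabs (x - x0) <= d -> Rabs (f x - f x0 - a * (x - x0)^2) <= C * Rabs (x - x0) ^ 3) ->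
  is_local_min f x0.
Proof.
  intros Ha Hd HC Hf.
  exists (Rmin d (a / (C + 1))). split.
  { apply Rmin_pos; [lra | apply Rdiv_lt_0_compat; lra]. }
  intros x Hx. set (σ := Rabs (x - x0)) in *.
  assert (Hσ : 0 <= σ) by apply Rabs_pos.
  assert (Hσd : σ <= d) by (left; eapply Rlt_le_trans; [exact Hx | apply Rmin_l]).
  assert (Hσa : (C + 1) * σ <= a).
  { assert (σ <= a / (C + 1)) by (left; eapply Rlt_le_trans; [exact Hx | apply Rmin_r]).
    apply Rmult_le_compat_l with (r := C + 1) in H; [|lra].
    replace ((C + 1) * (a / (C + 1))) with a in H by (field; lra). exact H. }
  pose proof (proj1 (Rabs_le_between _ _) (Hf x Hσd)) as [Hlo _].
  fold σ in Hlo. replace ((x - x0)^2) with (σ^2) in Hlo by (unfold σ; apply pow2_abs).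
  assert (0 <= σ^2 * (a - C * σ)) by (apply Rmult_le_pos; nra).
  nra.
Qed.

Lemma is_local_max_of_opp (f : R -> R) x0 : is_local_min (fun x => - f x) x0 -> is_local_max f x0.
Proof.
  intros [d [Hd H]]. exists d. split; [exact Hd|]. intros x Hx. specialize (H x Hx). lra.
Qed.

(** * Pairs of sinc terms *)

Definition pair_remainder_coef (p : R) : R := 100 * p + 100 * p^2 + 400 * p^3.

Lemma pair_remainder_coef_pos p : 0 < p -> 0 < pair_remainder_coef p.
Proof. intros Hp. unfold pair_remainder_coef. pose proof (pow_lt p 3 Hp). nra. Qed.

(* The terms left over in the second-order expansion of
   [exp (p (ln (cos y) - ln (1 + u))) + exp (p (ln (cos y) - ln (1 - u)))]:
   [e1], [e2p], [e2m] are the Taylor remainders of [ln (cos y)] and [ln (1 ± u)],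
   [e3p], [e3m] those of the two exponentials. *)
Lemma pair_remainder_le p σ u y e1 e2p e2m e3p e3m :
  0 < p -> 0 <= σ <= /8 -> Rabs u <= 2 * σ -> y^2 <= 16 * σ^2 ->
  Rabs e1 <= 32 * σ^3 -> Rabs e2p <= 16 * σ^3 -> Rabs e2m <= 16 * σ^3 ->
  Rabs e3p <= 192 * p^3 * σ^3 -> Rabs e3m <= 192 * p^3 * σ^3 ->
  let cp := u^2/2 - y^2/2 + e1 - e2p in
  let cm := u^2/2 - y^2/2 + e1 - e2m in
  Rabs (p * (2 * e1 - e2p - e2m) + p * u * (p * cm - p * cp)
        + ((p * cp)^2 + (p * cm)^2) / 2 + e3p + e3m)
    <= pair_remainder_coef p * σ^3.
Proof.
  intros Hp Hs Hu Hy H1 H2 H3 H4 H5 cp cm.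
  assert (Hu2 : u^2 <= 4 * σ^2) by (rewrite <- (pow2_abs u); pose proof (Rabs_pos u); nra).
  assert (Hs3 : σ^3 <= σ^2 / 8) by nra.
  apply Rabs_le_between in H1, H2, H3.
  assert (Hcp : Rabs cp <= 16 * σ^2) by (apply Rabs_le; unfold cp; nra).
  assert (Hcm : Rabs cm <= 16 * σ^2) by (apply Rabs_le; unfold cm; nra).
  clearbody cp cm.
  assert (T1 : Rabs (p * (2 * e1 - e2p - e2m)) <= 96 * (p * σ^3)).
  { rewrite Rabs_mult, Rabs_pos_eq by lra.
    replace (96 * (p * σ^3)) with (p * (96 * σ^3)) by ring.
    apply Rmult_le_compat_l; [lra|]. apply Rabs_le. lra. }
  assert (T2 : Rabs (p * u * (p * cm - p * cp)) <= 64 * (p^2 * σ^3)).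
  { replace (p * u * (p * cm - p * cp)) with (p^2 * (u * (cm - cp))) by ring.
    rewrite Rabs_mult, Rabs_pos_eq by nra. rewrite Rabs_mult.
    assert (Rabs (cm - cp) <= 32 * σ^2).
    { unfold Rminus. eapply Rle_trans; [apply Rabs_triang|]. rewrite Rabs_Ropp. lra. }
    pose proof (Rabs_pos u). pose proof (Rabs_pos (cm - cp)).
    replace (64 * (p^2 * σ^3)) with (p^2 * ((2 * σ) * (32 * σ^2))) by ring.
    apply Rmult_le_compat_l; [nra|]. apply Rmult_le_compat; lra. }
  assert (T3 : Rabs (((p * cp)^2 + (p * cm)^2) / 2) <= 32 * (p^2 * σ^3)).
  { rewrite Rabs_pos_eq by nra.
    assert (cp^2 <= 256 * σ^4) by (rewrite <- (pow2_abs cp); pose proof (Rabs_pos cp); nra).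
    assert (cm^2 <= 256 * σ^4) by (rewrite <- (pow2_abs cm); pose proof (Rabs_pos cm); nra).
    replace (((p * cp)^2 + (p * cm)^2) / 2) with (p^2 * ((cp^2 + cm^2) / 2)) by field.
    replace (32 * (p^2 * σ^3)) with (p^2 * (32 * σ^3)) by ring.
    apply Rmult_le_compat_l; nra. }
  match goal with |- Rabs (?a + ?b + ?c + ?d + ?e) <= _ =>
    pose proof (Rabs_triang (a + b + c + d) e); pose proof (Rabs_triang (a + b + c) d);
    pose proof (Rabs_triang (a + b) c); pose proof (Rabs_triang a b) end.
  unfold pair_remainder_coef.
  pose proof (pow_le σ 3 (proj1 Hs)).
  assert (0 <= p * σ^3) by nra.
  assert (0 <= p^2 * σ^3) by nra.
  assert (0 <= p^3 * σ^3) by (pose proof (pow_le p 3 ltac:(lra)); nra).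
  nra.
Qed.

Lemma exp_ln_cos_pair_expansion p s u :
  1 < p -> Rabs s <= /8 -> p * Rabs s <= /4 -> Rabs u <= 2 * Rabs s ->
  Rabs (exp (p * (ln (cos (PI * s)) - ln (1 + u))) + exp (p * (ln (cos (PI * s)) - ln (1 - u)))
        - 2 - p * (p + 1) * u^2 + p * (PI * s)^2)
    <= pair_remainder_coef p * Rabs s ^ 3.
Proof.
  intros Hp Hs Hps Hu. pose proof (Rabs_pos s).
  assert (Hu' : Rabs (- u) <= 2 * Rabs s) by (rewrite Rabs_Ropp; exact Hu).
  assert (E3 : forall v, Rabs v <= 2 * Rabs s ->
     let L := p * (ln (cos (PI * s)) - ln (1 + v)) in
     Rabs (exp L - 1 - L - L^2 / 2) <= 192 * p^3 * Rabs s ^ 3).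
  { intros v Hv L.
    assert (HL : Rabs L <= 4 * p * Rabs s).
    { unfold L. rewrite Rabs_mult, Rabs_pos_eq by lra.
      replace (4 * p * Rabs s) with (p * (4 * Rabs s)) by ring.
      apply Rmult_le_compat_l; [lra | apply Rabs_ln_cos_PI_sub_ln1p_le; assumption]. }
    eapply Rle_trans; [apply Rabs_exp_taylor2_le; lra|].
    replace (192 * p^3 * Rabs s ^ 3) with (3 * (4 * p * Rabs s)^3) by ring.
    apply Rmult_le_compat_l; [lra|]. apply pow_incr. split; [apply Rabs_pos | exact HL]. }
  pose proof (Rabs_ln1p_taylor2_small_le s (- u) Hs Hu') as E2m.
  replace (ln (1 + - u) - - u + (- u)^2 / 2) with (ln (1 - u) + u + u^2 / 2) in E2m
    by (unfold Rminus; field).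
  pose proof (E3 (- u) Hu') as E3m. cbv zeta in E3m.
  replace (1 + - u) with (1 - u) in E3m by ring.
  pose proof (pair_remainder_le p (Rabs s) u (PI * s) _ _ _ _ _ ltac:(lra)
                ltac:(split; [apply Rabs_pos | lra]) Hu (PI_mult_sq_le s)
                (Rabs_ln_cos_PI_taylor_le s Hs) (Rabs_ln1p_taylor2_small_le s u Hs Hu) E2m
                (E3 u Hu) E3m) as HA.
  cbv zeta in HA.
  match type of HA with Rabs ?X <= _ => replace (exp (p * (ln (cos (PI * s)) - ln (1 + u))) +
    exp (p * (ln (cos (PI * s)) - ln (1 - u))) - 2 - p * (p + 1) * u ^ 2 + p * (PI * s) ^ 2)
    with X by field end.
  exact HA.
Qed.

Lemma Rabs_sin_add_odd_half_PI m x : Rabs (sin (x + (2 * INR m + 1) * PI / 2)) = Rabs (cos x).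
Proof.
  induction m as [|m IH].
  - replace (x + (2 * INR 0 + 1) * PI / 2) with (x + PI / 2) by (simpl; field).
    rewrite sin_plus, sin_PI2, cos_PI2. f_equal; ring.
  - rewrite S_INR.
    replace (x + (2 * (INR m + 1) + 1) * PI / 2) with ((x + (2 * INR m + 1) * PI / 2) + PI)
      by field.
    rewrite neg_sin, Rabs_Ropp. exact IH.
Qed.

Lemma sinc_opp t : sinc (- t) = sinc t.
Proof.
  pose proof PI_RGT_0. unfold sinc.
  destruct (Req_EM_T (- t) 0); destruct (Req_EM_T t 0); try lra.
  replace (PI * - t) with (- (PI * t)) by ring. rewrite sin_neg. field. split; lra.
Qed.

(* Near a half-odd integer, [|sin (PI x)| = cos (PI s)] with [s] the distance to it. *)
Lemma abs_pow_sinc_half_odd p s m : Rabs s <= /8 ->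
  abs_pow (sinc (s + (2 * INR m + 1) / 2)) p
  = Rpower (cos (PI * s) / (PI * ((2 * INR m + 1) / 2 + s))) p.
Proof.
  intros Hs. pose proof (pos_INR m). pose proof PI_RGT_0. pose proof PI2_3_2.
  apply Rabs_le_between in Hs.
  assert (Hc : 0 < cos (PI * s)) by (apply cos_gt_0; nra).
  assert (Hd : 0 < PI * ((2 * INR m + 1) / 2 + s)) by nra.
  assert (Habs : Rabs (sinc (s + (2 * INR m + 1) / 2))
                 = cos (PI * s) / (PI * ((2 * INR m + 1) / 2 + s))).
  { unfold sinc. destruct Req_EM_T as [He|_]; [lra|].
    replace (PI * (s + (2 * INR m + 1) / 2)) with (PI * s + (2 * INR m + 1) * PI / 2) by field.
    unfold Rdiv at 1. rewrite Rabs_mult, Rabs_sin_add_odd_half_PI, Rabs_pos_eq by lra.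
    rewrite Rabs_inv, Rabs_pos_eq by lra. field. lra. }
  unfold abs_pow. destruct Req_EM_T as [He|_].
  - rewrite He, Rabs_R0 in Habs.
    pose proof (Rdiv_lt_0_compat _ _ Hc Hd). lra.
  - rewrite Habs. reflexivity.
Qed.

Lemma abs_pow_sinc_half_odd_le p s m : 0 < p -> Rabs s <= /8 ->
  abs_pow (sinc (s + (2 * INR m + 1) / 2)) p <= Rpower (4 / PI) p * Rpower (2 * INR m + 1) (- p).
Proof.
  intros Hp Hs. rewrite abs_pow_sinc_half_odd by auto.
  pose proof (pos_INR m). pose proof PI_RGT_0. pose proof PI2_3_2.
  apply Rabs_le_between in Hs.
  assert (Hc : 0 < cos (PI * s)) by (apply cos_gt_0; nra).
  pose proof (COS_bound (PI * s)).
  replace (Rpower (4 / PI) p * Rpower (2 * INR m + 1) (- p))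
    with (Rpower (4 / (PI * (2 * INR m + 1))) p).
  2: { unfold Rpower. rewrite <- exp_plus. f_equal. rewrite !ln_div, ln_mult; try nra; ring. }
  apply Rle_Rpower_l; [lra|]. split; [apply Rdiv_lt_0_compat; nra|].
  unfold Rdiv. apply Rle_trans with (1 * / (PI * ((2 * INR m + 1) / 2 + s))).
  - apply Rmult_le_compat_r; [left; apply Rinv_0_lt_compat; nra | lra].
  - rewrite Rmult_1_l. apply Rle_trans with (/ (PI * ((2 * INR m + 1) / 4))).
    + apply Rinv_le_contravar; [nra|]. apply Rmult_le_compat_l; lra.
    + right. field. lra.
Qed.

Definition sinc_pair (p b s : R) : R := abs_pow (sinc (s + b / 2)) p + abs_pow (sinc (s - b / 2)) p.

Lemma sinc_pair_exp_form p m s : Rabs s <= /8 ->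
  sinc_pair p (2 * INR m + 1) s = Rpower PI (- p) * Rpower ((2 * INR m + 1) / 2) (- p) *
    (exp (p * (ln (cos (PI * s)) - ln (1 + 2 * s / (2 * INR m + 1))))
     + exp (p * (ln (cos (PI * s)) - ln (1 - 2 * s / (2 * INR m + 1))))).
Proof.
  intros Hs. pose proof (pos_INR m). pose proof PI_RGT_0. pose proof PI2_3_2.
  pose proof Hs as Hs'. apply Rabs_le_between in Hs'.
  assert (Hc : 0 < cos (PI * s)) by (apply cos_gt_0; nra).
  unfold sinc_pair. rewrite abs_pow_sinc_half_odd by auto.
  replace (s - (2 * INR m + 1) / 2) with (- (- s + (2 * INR m + 1) / 2)) by ring.
  rewrite sinc_opp, abs_pow_sinc_half_odd by (rewrite Rabs_Ropp; auto).
  replace (PI * - s) with (- (PI * s)) by ring. rewrite cos_neg.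
  set (b := 2 * INR m + 1).
  assert (Hb : 1 <= b) by (unfold b; lra).
  assert (Hu : -/4 <= 2 * s / b <= /4).
  { split; apply Rmult_le_reg_r with b; unfold Rdiv; try rewrite Rmult_assoc, Rinv_l; nra. }
  replace (b / 2 + s) with ((b / 2) * (1 + 2 * s / b)) by (field; lra).
  replace (b / 2 + - s) with ((b / 2) * (1 - 2 * s / b)) by (field; lra).
  rewrite !Rpower_div_PI_mult by lra. ring.
Qed.

Definition sinc_scale (p : R) : R := Rpower PI (- p) * Rpower 2 p.

Lemma sinc_scale_pos p : 0 < sinc_scale p.
Proof. apply Rmult_lt_0_compat; apply Rpower_pos. Qed.

Lemma sinc_pair_expansion p m s : 1 < p -> Rabs s <= /8 -> p * Rabs s <= /4 ->
  let b := 2 * INR m + 1 in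
  Rabs (sinc_pair p b s - sinc_pair p b 0
        - sinc_scale p * p * s^2 * (4 * (p + 1) * Rpower b (- (p + 2)) - PI^2 * Rpower b (- p)))
  <= sinc_scale p * Rpower b (- p) * (pair_remainder_coef p * Rabs s ^ 3).
Proof.
  intros Hp Hs Hps b. unfold b.
  rewrite !sinc_pair_exp_form by (try rewrite Rabs_R0; lra).
  fold b. assert (Hb : 1 <= b) by (unfold b; pose proof (pos_INR m); lra).
  replace (PI * 0) with 0 by ring. rewrite cos_0, ln_1.
  replace (2 * 0 / b) with 0 by (field; lra). rewrite Rplus_0_r, Rminus_0_r, ln_1.
  replace (p * (0 - 0)) with 0 by ring. rewrite exp_0.
  rewrite Rpower_half_opp, Rpower_opp_add2 by lra.
  set (K := Rpower PI (- p) * (Rpower 2 p * Rpower b (- p))).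
  assert (HK : 0 < K) by (unfold K; repeat apply Rmult_lt_0_compat; apply Rpower_pos).
  match goal with |- Rabs (K * ?F - K * (1 + 1) - _) <= _ =>
    replace (K * F - K * 2 - _) with (K * (F - 2 - p * (p + 1) * (2 * s / b)^2 + p * (PI * s)^2))
      by (unfold K, sinc_scale; field; lra) end.
  rewrite Rabs_mult, (Rabs_pos_eq K) by lra.
  replace (sinc_scale p * Rpower b (- p) * (pair_remainder_coef p * Rabs s ^ 3))
    with (K * (pair_remainder_coef p * Rabs s ^ 3)) by (unfold K, sinc_scale; ring).
  apply Rmult_le_compat_l; [lra|].
  apply exp_ln_cos_pair_expansion; auto.
  unfold Rdiv. rewrite !Rabs_mult, Rabs_inv, (Rabs_pos_eq 2), (Rabs_pos_eq b) by lra.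
  pose proof (Rabs_pos s).
  assert (/ b <= 1) by (rewrite <- Rinv_1; apply Rinv_le_contravar; lra).
  assert (0 < / b) by (apply Rinv_0_lt_compat; lra). nra.
Qed.

(** * The incomplete Lambda function *)

Definition lambda_base (N j : nat) : R := 2 * INR (N + j) + 1.

Lemma lambda_base_ge1 N j : 1 <= lambda_base N j.
Proof. unfold lambda_base. pose proof (pos_INR (N + j)). lra. Qed.

Lemma lambda_base_S N j : lambda_base N (S j) = lambda_base N j + 2.
Proof. unfold lambda_base. rewrite <- plus_n_Sm, S_INR. ring. Qed.

Lemma lambda_base_0 N : lambda_base N 0 = 2 * INR N + 1.
Proof. unfold lambda_base. rewrite Nat.add_0_r. reflexivity. Qed.

Lemma lambda_inc_series_bound N q : 1 < q ->
  is_series (fun j => Rpower (lambda_base N j) (- q)) (lambda_inc q (INR N)) /\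
  lambda_inc q (INR N)
    <= Rpower (lambda_base N 0) (- q) + Rpower (lambda_base N 0) (1 - q) / (2 * (q - 1)).
Proof.
  intros Hq.
  set (a := fun j => Rpower (lambda_base N j) (- q)).
  set (F := fun j => Rpower (lambda_base N j) (1 - q) / (2 * (q - 1))).
  assert (HF : forall n, 0 <= F n)
    by (intros; apply Rdiv_le_0_compat; [left; apply Rpower_pos | lra]).
  assert (Hsum : forall n, sum_n a n + F n <= a O + F O).
  { induction n as [|n IH]; [rewrite sum_O; lra|].
    rewrite sum_Sn. unfold plus; simpl.
    pose proof (Rpower_tail_step q (lambda_base N n) Hq (lambda_base_ge1 N n)).
    unfold a, F in *. rewrite lambda_base_S. lra. }
  destruct (is_series_of_bounded_sums a (a O + F O)) as [l [Hl Hle]].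
  - intros n. left. apply Rpower_pos.
  - intros n. specialize (Hsum n). specialize (HF n). lra.
  - replace (lambda_inc q (INR N)) with l; [split; assumption|].
    symmetry. unfold lambda_inc. apply is_series_unique.
    apply (is_series_ext a); [|exact Hl].
    intros k. unfold a, lambda_base. rewrite Rpower_Ropp, S_INR, plus_INR.
    f_equal. f_equal. ring.
Qed.

Lemma is_series_lambda_inc N q : 1 < q ->
  is_series (fun j => Rpower (lambda_base N j) (- q)) (lambda_inc q (INR N)).
Proof. intros Hq. exact (proj1 (lambda_inc_series_bound N q Hq)). Qed.

Lemma lambda_inc_ge_first N q : 1 < q -> Rpower (lambda_base N 0) (- q) <= lambda_inc q (INR N).
Proof.
  intros Hq.
  pose proof (sum_n_le_is_series _ _ O (fun n => Rlt_le _ _ (Rpower_pos _ _))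
                (is_series_lambda_inc N q Hq)) as H.
  rewrite sum_O in H. exact H.
Qed.

Lemma lambda_inc_pos N q : 1 < q -> 0 < lambda_inc q (INR N).
Proof.
  intros Hq. pose proof (lambda_inc_ge_first N q Hq).
  pose proof (Rpower_pos (lambda_base N 0) (- q)). lra.
Qed.

Lemma lambda_inc_sub_le N e s1 s s' : 0 < e -> 1 < s1 - e -> s1 <= s <= s' ->
  0 <= lambda_inc s (INR N) - lambda_inc s' (INR N)
    <= (s' - s) * lambda_inc (s1 - e) (INR N) / e.
Proof.
  intros He Hs1 Hs.
  assert (HD : is_series
      (fun j => Rpower (lambda_base N j) (- s) - Rpower (lambda_base N j) (- s'))
      (lambda_inc s (INR N) - lambda_inc s' (INR N)))
    by exact (is_series_minus _ _ _ _ (is_series_lambda_inc N s ltac:(lra))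
                (is_series_lambda_inc N s' ltac:(lra))).
  assert (Hterm : forall j, 0 <= Rpower (lambda_base N j) (- s) - Rpower (lambda_base N j) (- s')
      <= (s' - s) * Rpower (lambda_base N j) (- (s1 - e)) / e)
    by (intros j; apply Rpower_opp_sub_le; auto using lambda_base_ge1).
  split.
  - apply (is_series_nonneg _ _ (fun n => proj1 (Hterm n)) HD).
  - replace ((s' - s) * lambda_inc (s1 - e) (INR N) / e)
      with ((s' - s) / e * lambda_inc (s1 - e) (INR N)) by (field; lra).
    apply (is_series_le _ (fun j => (s' - s) / e * Rpower (lambda_base N j) (- (s1 - e))) _ _ HD);
      [exact (is_series_scal _ _ _ (is_series_lambda_inc N _ Hs1))|].
    intros n. pose proof (Hterm n).
    replace ((s' - s) / e * Rpower (lambda_base N n) (- (s1 - e)))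
      with ((s' - s) * Rpower (lambda_base N n) (- (s1 - e)) / e) by (field; lra).
    lra.
Qed.

Lemma lambda_inc_continuous N s0 : 1 < s0 -> continuity_pt (fun s => lambda_inc s (INR N)) s0.
Proof.
  intros Hs0. apply continuity_pt_locally. intros eps.
  set (e := (s0 - 1) / 4). set (s1 := s0 - 2 * e).
  assert (He : 0 < e) by (unfold e; lra).
  set (K := lambda_inc (s1 - e) (INR N) / e).
  assert (Hs1 : 1 < s1 - e) by (unfold s1, e; lra).
  assert (HK : 0 <= K) by (apply Rdiv_le_0_compat; [left; apply lambda_inc_pos, Hs1 | lra]).
  assert (Hd : 0 < Rmin (2 * e) (eps / (K + 1)))
    by (apply Rmin_pos; [lra | apply Rdiv_lt_0_compat; [apply cond_pos | lra]]).
  exists (mkposreal _ Hd). intros u Hu. change (Rabs (u - s0) < Rmin (2 * e) (eps / (K + 1))) in Hu.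
  assert (Hu1 : Rabs (u - s0) < 2 * e) by (eapply Rlt_le_trans; [exact Hu | apply Rmin_l]).
  assert (Hu2 : Rabs (u - s0) < eps / (K + 1)) by (eapply Rlt_le_trans; [exact Hu | apply Rmin_r]).
  assert (Hlip : Rabs (lambda_inc u (INR N) - lambda_inc s0 (INR N)) <= K * Rabs (u - s0)).
  { apply Rabs_def2 in Hu1. unfold K.
    destruct (Rle_dec u s0).
    - destruct (lambda_inc_sub_le N e s1 u s0 He Hs1) as [H0 H1]; [unfold s1; lra|].
      rewrite Rabs_pos_eq, Rabs_left1 by lra.
      replace (lambda_inc (s1 - e) (INR N) / e * - (u - s0))
        with ((s0 - u) * lambda_inc (s1 - e) (INR N) / e) by (field; lra). lra.
    - destruct (lambda_inc_sub_le N e s1 s0 u He Hs1) as [H0 H1]; [unfold s1; lra|].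
      rewrite Rabs_left1, Rabs_pos_eq by lra.
      replace (lambda_inc (s1 - e) (INR N) / e * (u - s0))
        with ((u - s0) * lambda_inc (s1 - e) (INR N) / e) by (field; lra). lra. }
  apply Rle_lt_trans with (K * Rabs (u - s0)); [exact Hlip|].
  apply Rle_lt_trans with ((K + 1) * Rabs (u - s0)); [pose proof (Rabs_pos (u - s0)); nra|].
  apply Rmult_lt_reg_r with (/ (K + 1)); [apply Rinv_0_lt_compat; lra|].
  replace ((K + 1) * Rabs (u - s0) * / (K + 1)) with (Rabs (u - s0)) by (field; lra).
  exact Hu2.
Qed.

(** * The local expansion of h *)

Lemma abs_pow_nonneg y p : 0 <= abs_pow y p.
Proof. unfold abs_pow. destruct Req_EM_T; [lra | left; apply Rpower_pos]. Qed.

Lemma h_term_nonneg p N x n : 0 <= h_term p N x n.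
Proof. unfold h_term. destruct Rlt_dec; [apply abs_pow_nonneg | lra]. Qed.

Lemma h_term_pair p N x k : Rabs (x - 1/2) <= /8 ->
  h_term p N x (Z.of_nat k + 1) + h_term p N x (- Z.of_nat k)
  = if le_dec N k then sinc_pair p (lambda_base 0 k) (x - 1/2) else 0.
Proof.
  intros Hs. apply Rabs_le_between in Hs.
  assert (Hl : x - IZR (Z.of_nat k + 1) = (x - 1/2) - lambda_base 0 k / 2)
    by (rewrite plus_IZR, <- INR_IZR_INZ; unfold lambda_base; simpl; field).
  assert (Hr : x - IZR (- Z.of_nat k) = (x - 1/2) + lambda_base 0 k / 2)
    by (rewrite opp_IZR, <- INR_IZR_INZ; unfold lambda_base; simpl; field).
  unfold h_term. rewrite Hl, Hr. unfold lambda_base. simpl (0 + k)%nat.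
  destruct (le_dec N k) as [Hk|Hk].
  - apply le_INR in Hk. pose proof (pos_INR k).
    destruct Rlt_dec as [_|Hn]; [|exfalso; apply Hn; rewrite Rabs_left1; lra].
    destruct Rlt_dec as [_|Hn]; [|exfalso; apply Hn; rewrite Rabs_pos_eq; lra].
    unfold sinc_pair. ring.
  - assert (Hk' : INR k + 1 <= INR N) by (rewrite <- S_INR; apply le_INR; lia).
    pose proof (pos_INR k).
    assert (Hnear : forall t, Rabs t <= INR k + 5/8 -> ~ INR N < Rabs t) by (intros; lra).
    destruct Rlt_dec as [Hn|_]; [exfalso; revert Hn; apply Hnear, Rabs_le; lra|].
    destruct Rlt_dec as [Hn|_]; [exfalso; revert Hn; apply Hnear, Rabs_le; lra|].
    ring.
Qed.

Lemma sinc_pair_nonneg p b s : 0 <= sinc_pair p b s.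
Proof.
  unfold sinc_pair.
  pose proof (abs_pow_nonneg (sinc (s + b / 2)) p).
  pose proof (abs_pow_nonneg (sinc (s - b / 2)) p).
  lra.
Qed.

Lemma sinc_pair_le p N j s : 0 < p -> Rabs s <= /8 ->
  sinc_pair p (lambda_base N j) s <= 2 * Rpower (4 / PI) p * Rpower (lambda_base N j) (- p).
Proof.
  intros Hp Hs. unfold sinc_pair, lambda_base.
  replace (s - (2 * INR (N + j) + 1) / 2) with (- (- s + (2 * INR (N + j) + 1) / 2)) by ring.
  rewrite sinc_opp.
  pose proof (abs_pow_sinc_half_odd_le p s (N + j) Hp Hs).
  pose proof (abs_pow_sinc_half_odd_le p (- s) (N + j) Hp ltac:(rewrite Rabs_Ropp; lra)).
  lra.
Qed.

Lemma is_series_frak_h p N x : 1 < p -> Rabs (x - 1/2) <= /8 ->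
  is_series (fun j => sinc_pair p (lambda_base N j) (x - 1/2)) (frak_h p N x).
Proof.
  intros Hp Hs.
  destruct (ex_series_le (V := R_CompleteNormedModule)
              (fun j => sinc_pair p (lambda_base N j) (x - 1/2))
              (fun j => 2 * Rpower (4 / PI) p * Rpower (lambda_base N j) (- p))) as [l Hl].
  { intros j. change (norm ?y) with (Rabs y).
    rewrite Rabs_pos_eq by apply sinc_pair_nonneg.
    apply sinc_pair_le; lra. }
  { eexists. exact (is_series_scal _ _ _ (is_series_lambda_inc N p Hp)). }
  replace (frak_h p N x) with l; [exact Hl|].
  symmetry. apply Series_Z_pair; [apply h_term_nonneg|].
  apply (is_series_of_shift_zeros N).
  - intros k Hk. rewrite h_term_pair by auto. destruct le_dec; [lia | reflexivity].
  - eapply is_series_ext; [|exact Hl]. intros j. cbv beta.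
    rewrite h_term_pair by auto. destruct le_dec as [_|Hn]; [|lia].
    unfold lambda_base. rewrite Nat.add_0_l. reflexivity.
Qed.

Definition h_curvature (N : nat) (p : R) : R :=
  4 * (p + 1) * lambda_inc (p + 2) (INR N) - PI^2 * lambda_inc p (INR N).

Lemma is_series_h_curvature N p : 1 < p ->
  is_series (fun j => 4 * (p + 1) * Rpower (lambda_base N j) (- (p + 2))
                      - PI^2 * Rpower (lambda_base N j) (- p)) (h_curvature N p).
Proof.
  intros Hp.
  exact (is_series_minus _ _ _ _
           (is_series_scal (4 * (p + 1)) _ _ (is_series_lambda_inc N (p + 2) ltac:(lra)))
           (is_series_scal (PI^2) _ _ (is_series_lambda_inc N p Hp))).
Qed.

Lemma frak_h_expansion p N x : 1 < p -> Rabs (x - 1/2) <= Rmin (/8) (/ (4 * p)) ->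
  Rabs (frak_h p N x - frak_h p N (1/2) - sinc_scale p * p * h_curvature N p * (x - 1/2)^2)
    <= sinc_scale p * pair_remainder_coef p * lambda_inc p (INR N) * Rabs (x - 1/2) ^ 3.
Proof.
  intros Hp Hx. set (s := x - 1/2) in *.
  assert (Hs : Rabs s <= /8) by (eapply Rle_trans; [exact Hx | apply Rmin_l]).
  assert (Hps : p * Rabs s <= /4).
  { assert (Rabs s <= / (4 * p)) by (eapply Rle_trans; [exact Hx | apply Rmin_r]).
    apply Rmult_le_compat_l with (r := p) in H; [|lra].
    replace (p * / (4 * p)) with (/4) in H by (field; lra). exact H. }
  pose proof (is_series_frak_h p N x Hp Hs) as H1.
  assert (H0 : is_series (fun j => sinc_pair p (lambda_base N j) 0) (frak_h p N (1/2))).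
  { replace 0 with (1/2 - 1/2) by ring. apply is_series_frak_h; [exact Hp|].
    rewrite Rminus_diag, Rabs_R0. lra. }
  fold s in H1.
  replace (sinc_scale p * p * h_curvature N p * s^2)
    with (sinc_scale p * p * s^2 * h_curvature N p) by ring.
  apply (is_series_Rabs_le
    (fun j => sinc_pair p (lambda_base N j) s - sinc_pair p (lambda_base N j) 0
              - sinc_scale p * p * s^2 * (4 * (p + 1) * Rpower (lambda_base N j) (- (p + 2))
                                          - PI^2 * Rpower (lambda_base N j) (- p)))
    (fun j => sinc_scale p * pair_remainder_coef p * Rabs s ^ 3 * Rpower (lambda_base N j) (- p))).
  - exact (is_series_minus _ _ _ _ (is_series_minus _ _ _ _ H1 H0)
             (is_series_scal _ _ _ (is_series_h_curvature N p Hp))).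
  - replace (sinc_scale p * pair_remainder_coef p * lambda_inc p (INR N) * Rabs s ^ 3)
      with (sinc_scale p * pair_remainder_coef p * Rabs s ^ 3 * lambda_inc p (INR N)) by ring.
    exact (is_series_scal _ _ _ (is_series_lambda_inc N p Hp)).
  - intros j. pose proof (sinc_pair_expansion p (N + j) s Hp Hs Hps) as HT.
    unfold lambda_base. cbv zeta in HT.
    eapply Rle_trans; [exact HT | right; ring].
Qed.

Lemma frak_h_local_min p N : 1 < p -> 0 < h_curvature N p -> is_local_min (frak_h p N) (1/2).
Proof.
  intros Hp Hc.
  pose proof (sinc_scale_pos p). pose proof (pair_remainder_coef_pos p ltac:(lra)).
  pose proof (lambda_inc_pos N p Hp).
  apply (is_local_min_of_quadratic _ _ (sinc_scale p * p * h_curvature N p)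
           (sinc_scale p * pair_remainder_coef p * lambda_inc p (INR N)) (Rmin (/8) (/ (4 * p)))).
  - apply Rmult_lt_0_compat; [apply Rmult_lt_0_compat|]; lra.
  - apply Rmin_pos; [lra | apply Rinv_0_lt_compat; lra].
  - left. apply Rmult_lt_0_compat; [apply Rmult_lt_0_compat|]; lra.
  - intros x Hx. apply frak_h_expansion; assumption.
Qed.

Lemma frak_h_local_max p N : 1 < p -> h_curvature N p < 0 -> is_local_max (frak_h p N) (1/2).
Proof.
  intros Hp Hc. apply is_local_max_of_opp.
  pose proof (sinc_scale_pos p). pose proof (pair_remainder_coef_pos p ltac:(lra)).
  pose proof (lambda_inc_pos N p Hp).
  apply (is_local_min_of_quadratic _ _ (- (sinc_scale p * p * h_curvature N p))
           (sinc_scale p * pair_remainder_coef p * lambda_inc p (INR N)) (Rmin (/8) (/ (4 * p)))).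
  - assert (0 < sinc_scale p * p * - h_curvature N p)
      by (apply Rmult_lt_0_compat; [apply Rmult_lt_0_compat|]; lra). lra.
  - apply Rmin_pos; [lra | apply Rinv_0_lt_compat; lra].
  - left. apply Rmult_lt_0_compat; [apply Rmult_lt_0_compat|]; lra.
  - intros x Hx. rewrite <- Rabs_Ropp.
    replace (- (- frak_h p N x - - frak_h p N (1/2)
                - - (sinc_scale p * p * h_curvature N p) * (x - 1/2)^2))
      with (frak_h p N x - frak_h p N (1/2) - sinc_scale p * p * h_curvature N p * (x - 1/2)^2)
      by ring.
    apply frak_h_expansion; assumption.
Qed.

(** * The sign of the curvature *)

Lemma h_curvature_neg N p : 1 < p -> 4 * (p + 1) < PI^2 * (2 * INR N + 1)^2 -> h_curvature N p < 0.
Proof.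
  intros Hp Hl. set (b0 := 2 * INR N + 1) in *.
  assert (Hb0 : 1 <= b0) by (unfold b0; pose proof (pos_INR N); lra).
  assert (H : lambda_inc (p + 2) (INR N) <= / b0^2 * lambda_inc p (INR N)).
  { apply (is_series_le _ _ _ _ (is_series_lambda_inc N (p + 2) ltac:(lra))
             (is_series_scal _ _ _ (is_series_lambda_inc N p Hp))).
    intros j. pose proof (lambda_base_ge1 N j).
    rewrite Rpower_opp_add2 by lra.
    assert (b0 <= lambda_base N j)
      by (unfold b0, lambda_base; rewrite plus_INR; pose proof (pos_INR j); lra).
    pose proof (Rpower_pos (lambda_base N j) (- p)).
    unfold Rdiv. rewrite Rmult_comm. apply Rmult_le_compat_r; [lra|].
    apply Rinv_le_contravar; [nra|]. apply pow_incr. lra. }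
  pose proof (lambda_inc_pos N p Hp). unfold h_curvature.
  assert (4 * (p + 1) * lambda_inc (p + 2) (INR N) <= 4 * (p + 1) * (/ b0^2 * lambda_inc p (INR N)))
    by (apply Rmult_le_compat_l; lra).
  assert (4 * (p + 1) * / b0^2 < PI^2).
  { apply Rmult_lt_reg_r with (b0^2); [nra|]. rewrite Rmult_assoc, Rinv_l by nra. lra. }
  nra.
Qed.

Lemma h_curvature_pos N U : 1 < U ->
  PI^2 * (2 * INR N + 1)^2 * (2 * (U - 1) + (2 * INR N + 1)) < 8 * (U^2 - 1) -> 0 < h_curvature N U.
Proof.
  intros HU Hin. set (b0 := 2 * INR N + 1) in *.
  assert (Hb0 : 1 <= b0) by (unfold b0; pose proof (pos_INR N); lra).
  pose proof (lambda_inc_ge_first N (U + 2) ltac:(lra)) as H1.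
  pose proof (proj2 (lambda_inc_series_bound N U HU)) as H2.
  rewrite lambda_base_0 in H1, H2. fold b0 in H1, H2.
  rewrite Rpower_opp_add2 in H1 by lra.
  replace (1 - U) with (1 + - U) in H2 by ring. rewrite Rpower_plus, Rpower_1 in H2 by lra.
  set (R0 := Rpower b0 (- U)) in *. assert (HR : 0 < R0) by apply Rpower_pos.
  unfold h_curvature. pose proof PI_RGT_0. assert (0 < PI^2) by nra.
  assert (4 * (U + 1) * (R0 / b0^2) <= 4 * (U + 1) * lambda_inc (U + 2) (INR N))
    by (apply Rmult_le_compat_l; lra).
  assert (PI^2 * lambda_inc U (INR N) <= PI^2 * (R0 + b0 * R0 / (2 * (U - 1))))
    by (apply Rmult_le_compat_l; lra).
  assert (PI^2 * (R0 + b0 * R0 / (2 * (U - 1))) < 4 * (U + 1) * (R0 / b0^2)).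
  { replace (PI^2 * (R0 + b0 * R0 / (2 * (U - 1))))
      with (R0 * (PI^2 * b0^2 * (2 * (U - 1) + b0)) / (2 * (U - 1) * b0^2)) by (field; nra).
    replace (4 * (U + 1) * (R0 / b0^2)) with (R0 * (8 * (U^2 - 1)) / (2 * (U - 1) * b0^2))
      by (field; nra).
    unfold Rdiv. apply Rmult_lt_compat_r; [apply Rinv_0_lt_compat, Rmult_lt_0_compat; nra|].
    apply Rmult_lt_compat_l; auto. }
  lra.
Qed.

(* [h_curvature N q] is the series of the terms [4 (q + 1) b^-(p+2) - PI^2 b^-p], which
   change sign once (at [b = A]), reweighted by the decreasing [b ^ (p - q)]; freezing the
   weight at [A ^ (p - q)] can only decrease the sum, and leaves
   [h_curvature N p + 4 (q - p) lambda (p + 2)]. *)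
Lemma h_curvature_pos_of_nonneg N p q :
  1 < p -> p < q -> 0 <= h_curvature N p -> 0 < h_curvature N q.
Proof.
  intros Hp Hpq Hg. pose proof PI_RGT_0.
  set (c := 4 * (q + 1)).
  set (A := sqrt c / PI).
  assert (HA : 0 < A) by (apply Rdiv_lt_0_compat; [apply sqrt_lt_R0; unfold c|]; lra).
  assert (HA2 : c / A^2 = PI^2).
  { unfold A, Rdiv. rewrite Rpow_mult_distr, pow2_sqrt by (unfold c; lra).
    rewrite pow_inv. field. split; [lra | unfold c; lra]. }
  set (r := q - p).
  set (w := Rpower A (- r)).
  set (D := fun j => c * Rpower (lambda_base N j) (- (p + 2))
                    - PI^2 * Rpower (lambda_base N j) (- p)).
  assert (HD : is_series D (h_curvature N p + 4 * (q - p) * lambda_inc (p + 2) (INR N))).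
  { apply (is_series_ext (fun j => (4 * (p + 1) * Rpower (lambda_base N j) (- (p + 2))
                                    - PI^2 * Rpower (lambda_base N j) (- p))
                                   + 4 * (q - p) * Rpower (lambda_base N j) (- (p + 2)))).
    - intros j. unfold D, c. simpl. ring.
    - exact (is_series_plus _ _ _ _ (is_series_h_curvature N p Hp)
               (is_series_scal _ _ _ (is_series_lambda_inc N (p + 2) ltac:(lra)))). }
  assert (Hle : w * (h_curvature N p + 4 * (q - p) * lambda_inc (p + 2) (INR N))
                <= h_curvature N q).
  { apply (is_series_le _ _ _ _ (is_series_scal w _ _ HD) (is_series_h_curvature N q ltac:(lra))).
    intros j. set (b := lambda_base N j). assert (Hb : 1 <= b) by apply lambda_base_ge1.
    assert (E1 : Rpower b (- (q + 2)) = Rpower b (- r) * Rpower b (- (p + 2)))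
      by (rewrite <- Rpower_plus; f_equal; unfold r; ring).
    assert (E2 : Rpower b (- q) = Rpower b (- r) * Rpower b (- p))
      by (rewrite <- Rpower_plus; f_equal; unfold r; ring).
    assert (HDj : D j = Rpower b (- p) * (c / b^2 - c / A^2)).
    { unfold D. fold b. rewrite HA2, Rpower_opp_add2 by lra. field. lra. }
    assert (Hw : 0 <= Rpower b (- p) * ((Rpower b (- r) - w) * (c / b^2 - c / A^2))).
    { apply Rmult_le_pos; [left; apply Rpower_pos|].
      apply Rpower_opp_sub_mul_nonneg; unfold r, c; lra. }
    rewrite E1, E2. change (scal w (D j)) with (w * D j).
    replace (4 * (q + 1) * (Rpower b (- r) * Rpower b (- (p + 2)))
             - PI^2 * (Rpower b (- r) * Rpower b (- p)))
      with (Rpower b (- r) * D j) by (unfold D, c; fold b; ring).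
    rewrite HDj. lra. }
  pose proof (lambda_inc_pos N (p + 2) ltac:(lra)).
  assert (0 < w) by apply Rpower_pos.
  assert (0 < w * (h_curvature N p + 4 * (q - p) * lambda_inc (p + 2) (INR N)))
    by (apply Rmult_lt_0_compat; nra).
  lra.
Qed.

Lemma h_curvature_continuous N p : 1 < p -> continuity_pt (h_curvature N) p.
Proof.
  intros Hp. unfold h_curvature.
  apply continuity_pt_minus; apply continuity_pt_mult.
  - apply continuity_pt_mult; [apply continuity_pt_const; intros ? ?; reflexivity|].
    apply continuity_pt_plus; [apply derivable_continuous_pt, derivable_pt_id|].
    apply continuity_pt_const; intros ? ?; reflexivity.
  - apply (continuity_pt_comp (fun s => s + 2) (fun s => lambda_inc s (INR N))).
    + apply continuity_pt_plus; [apply derivable_continuous_pt, derivable_pt_id|].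
      apply continuity_pt_const; intros ? ?; reflexivity.
    + apply lambda_inc_continuous. lra.
  - apply continuity_pt_const; intros ? ?; reflexivity.
  - apply lambda_inc_continuous, Hp.
Qed.

Lemma sqrt_bound_le_quarter A : 4 <= A -> / 8 * (A - 12 + sqrt ((A - 12)^2 - 128)) <= A / 4 - 1.
Proof.
  intros HA.
  assert (sqrt ((A - 12)^2 - 128) <= Rabs (A - 12)).
  { rewrite <- (sqrt_pow2 (Rabs (A - 12))) by apply Rabs_pos. rewrite pow2_abs.
    apply sqrt_le_1_alt. lra. }
  unfold Rabs in H. destruct Rcase_abs in H; lra.
Qed.

Definition pstar_upper (N : nat) : R :=
  / 4 * sqrt (72 * PI^2 * (INR N + 1)^2 * (2 * PI^2 * (INR N + 1)^2 - 2 - PI^2)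
              + 4 + 36 * PI^2 + 9 * PI^4)
  + 3 * PI^2 * (INR N + 1)^2 - 3 / 4 * (2 + PI^2).

(* With [Y = 12 PI^2 M^2 - 3 (2 + PI^2)] the radicand is [Y^2 - 32], so [pstar_upper]
   is at least [Y / 2 - 1/4], which beats the cubic bound required by [h_curvature_pos]. *)
Lemma h_curvature_pstar_upper N : 2 < pstar_upper N /\ 0 < h_curvature N (pstar_upper N).
Proof.
  pose proof PI2_3_2. pose proof PI_4. pose proof (pos_INR N).
  set (M := INR N + 1). assert (HM : 1 <= M) by (unfold M; lra).
  assert (HM2 : 1 <= M^2) by nra.
  set (c := PI^2). assert (Hc : 9 < c <= 16) by (unfold c; split; nra).
  set (U := pstar_upper N).
  set (Y := 12 * c * M^2 - 3 * (2 + c)).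
  assert (HY : 75 <= Y) by (unfold Y; nra).
  assert (Hs : Y - 1 <= sqrt (Y^2 - 32)).
  { rewrite <- (sqrt_pow2 (Y - 1)) by lra. apply sqrt_le_1_alt. nra. }
  assert (HU : Y / 2 - / 4 <= U).
  { unfold U, pstar_upper. fold M c.
    replace (72 * c * M^2 * (2 * c * M^2 - 2 - c) + 4 + 36 * c + 9 * PI^4) with (Y^2 - 32)
      by (unfold Y, c; ring).
    unfold Y in *. lra. }
  assert (HU2 : 4 * c * M^2 <= U) by (unfold Y in HU; nra).
  assert (H36 : 36 <= U) by nra.
  assert (Hb : c * (2 * M - 1)^2 <= U) by nra.
  split; [lra|].
  apply h_curvature_pos; [lra|].
  replace (2 * INR N + 1) with (2 * M - 1) by (unfold M; ring). fold c.
  assert (36 * M <= U) by nra.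
  assert (c * (2 * M - 1)^2 * (2 * (U - 1) + (2 * M - 1)) <= U * (2 * U + 2 * M))
    by (apply Rmult_le_compat; nra).
  nra.
Qed.

Theorem theorem3 (N : nat) :
  exists pstar : R,
    1 < pstar /\
    (forall p : R, 1 < p -> pstar < p -> is_local_min (frak_h p N) (1 / 2)) /\
    (forall p : R, 1 < p -> p < pstar -> is_local_max (frak_h p N) (1 / 2)) /\
    4 * (pstar + 1) * lambda_inc (pstar + 2) (INR N)
      - PI ^ 2 * lambda_inc pstar (INR N) = 0 /\
    / 8 * (PI ^ 2 * (2 * INR N + 1) ^ 2 - 12
           + sqrt ((PI ^ 2 * (2 * INR N + 1) ^ 2 - 12) ^ 2 - 128)) <= pstar /\
    pstar <= / 4 * sqrt (72 * PI ^ 2 * (INR N + 1) ^ 2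
                           * (2 * PI ^ 2 * (INR N + 1) ^ 2 - 2 - PI ^ 2)
                         + 4 + 36 * PI ^ 2 + 9 * PI ^ 4)
             + 3 * PI ^ 2 * (INR N + 1) ^ 2 - 3 / 4 * (2 + PI ^ 2).
Proof.
  pose proof PI2_3_2. pose proof (pos_INR N).
  set (A := PI^2 * (2 * INR N + 1)^2).
  assert (HA : 9 < A) by (unfold A; nra).
  destruct (h_curvature_pstar_upper N) as [HU Hpos].
  assert (Hneg : h_curvature N (5/4) < 0) by (apply h_curvature_neg; fold A; lra).
  destruct (IVT_interv (h_curvature N) (5/4) (pstar_upper N)) as [z [[Hz1 Hz2] Hz]];
    [intros a Ha; apply h_curvature_continuous; lra | lra | exact Hneg | exact Hpos |].
  exists z. split; [lra|]. split; [|split; [|split; [exact Hz | split]]].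
  - intros p Hp Hzp. apply frak_h_local_min; [exact Hp|].
    apply (h_curvature_pos_of_nonneg N z p); lra.
  - intros p Hp Hpz. apply frak_h_local_max; [exact Hp|].
    destruct (Rlt_le_dec (h_curvature N p) 0) as [Hn|Hn]; [exact Hn|].
    pose proof (h_curvature_pos_of_nonneg N p z Hp Hpz Hn). lra.
  - fold A. eapply Rle_trans; [apply sqrt_bound_le_quarter; lra|].
    destruct (Rle_lt_dec (A / 4 - 1) z) as [Hz'|Hz']; [exact Hz'|].
    exfalso. assert (h_curvature N z < 0) by (apply h_curvature_neg; fold A; lra). lra.
  - exact Hz2.
Qed.
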